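(* Let $m>0$ be an even integer. If there exists a classical deterministic winning strategy for the matching game with parameter $m$, then there exist a graph $G=(V,E)$ with $|V|=m$ and a function $h:E\to\{0,1\}$ such that (1) there are at least $\dfrac{2^m}{2^{\lceil\log_2 m\rceil}}$ colourings of $G$ according to $h$, and (2) $G$ contains a connected component with more than $\frac{m}{2}$ vertices. (Equivalently: to show there is no classical deterministic winning strategy for parameter $m$, it suffices to show no such $G$ and $h$ exist.)
   Context: A perfect matching on $\{0,\ldots,m-1\}$ ($m$ even) is a partition of this set into $m/2$ sets of cardinality 2; $M_m$ denotes the set of all perfect matchings. Let $L=\lceil\log_2 m\rceil$. For $n\in\{0,\ldots,m-1\}$, $\bar n\in\{0,1\}^L$ is the $L$-bit binary representation of $n$, most significant bit first. On bit strings $\oplus$ is bitwise, and $u\cdot v=\bigoplus_i(u_i\wedge v_i)$. The matching game with parameter $m$: Alice receives $x\in\{0,1\}^m$ and outputs $a\in\{0,1\}^L$; Bob receives $y\in M_m$ and outputs a two-element set $\{b_1,b_2\}\subseteq\{0,\ldots,m-1\}$ and a string $b\in\{0,1\}^L$; they win on question $(x,y)$ iff $\{b_1,b_2\}\in y$ and $x_{b_1}\oplus x_{b_2}=(\bar b_1\oplus\bar b_2)\cdot(a\oplus b)$. A classical deterministic strategy is a pair of functions $s_A:\{0,1\}^m\to\{0,1\}^L$ and $s_B:M_m\to\{\text{two-element subsets of }\{0,\ldots,m-1\}\}\times\{0,1\}^L$; it is winning if $(s_A(x),s_B(y))$ wins on every question $(x,y)\in\{0,1\}^m\times M_m$. Given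 a graph $G=(V,E)$ and $h:E\to\{0,1\}$, a colouring of $G$ according to $h$ is a function $c:V\to\{0,1\}$ with $c(u)\oplus c(v)=h(\{u,v\})$ for every edge $\{u,v\}\in E$. A connected component is a nonempty maximal connected induced subgraph. *)

From mathcomp Require Import all_boot.
Set Implicit Arguments. Unset Strict Implicit. Unset Printing Implicit Defensive.

(* L = ceil(log2 m): up_log 2 m is the smallest e with m <= 2^e. *)
Definition Lbits (m : nat) : nat := up_log 2 m.

Definition bitstr (L : nat) := {ffun 'I_L -> bool}.

Definition bxor L (u v : bitstr L) : bitstr L := [ffun i => u i (+) v i].

Definition bdot L (u v : bitstr L) : bool := \big[addb/false]_(i < L) (u i && v i).

(* L-bit binary representation of n, most significant bit first:
   position i (0-based) holds bit number L-1-i of n. *)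
Definition bin (L n : nat) : bitstr L := [ffun i : 'I_L => odd (n %/ 2 ^ (L - 1 - i))].

Definition perfect_matching (m : nat) (y : {set {set 'I_m}}) : bool :=
  partition y [set: 'I_m] && [forall B in y, #|B| == 2].

Definition wins (m : nat) (x : {ffun 'I_m -> bool}) (y : {set {set 'I_m}})
  (a : bitstr (Lbits m)) (S : {set 'I_m}) (b : bitstr (Lbits m)) : Prop :=
  exists b1 b2 : 'I_m, [/\ b1 != b2, S = [set b1; b2], S \in y &
     x b1 (+) x b2 = bdot (bxor (bin (Lbits m) b1) (bin (Lbits m) b2)) (bxor a b)].

Definition winning_strategy (m : nat)
  (sA : {ffun 'I_m -> bool} -> bitstr (Lbits m))
  (sB : {set {set 'I_m}} -> {set 'I_m} * bitstr (Lbits m)) : Prop :=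
  (forall y, perfect_matching y -> #|(sB y).1| = 2) /\
  forall x y, perfect_matching y -> wins x y (sA x) (sB y).1 (sB y).2.

Definition simple_edges (m : nat) (E : {set {set 'I_m}}) : bool :=
  [forall e in E, #|e| == 2].

Definition colouring (m : nat) (E : {set {set 'I_m}}) (h : {set 'I_m} -> bool)
  (c : {ffun 'I_m -> bool}) : bool :=
  [forall u, forall v, ([set u; v] \in E) ==> (c u (+) c v == h [set u; v])].

Definition adj (m : nat) (E : {set {set 'I_m}}) : rel 'I_m :=
  fun u v => (u != v) && ([set u; v] \in E).

Definition component (m : nat) (E : {set {set 'I_m}}) (x : 'I_m) : {set 'I_m} :=
  [set y | connect (adj E) x y].

(* Fix Alice's most frequent answer a and an input x0 producing it; by pigeonhole at least
   2^m / 2^L inputs produce a. Let E be the set of all pairs Bob outputs. If Alice's inputs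
   x and x0 both produce a, then for every edge {u, v} of E the winning condition forces
   x_u + x_v = x0_u + x0_v, so every such x is a colouring of E according to the parities
   of x0. Finally, if all components of E had at most m/2 vertices, listing the vertices
   component by component and pairing the i-th with the (i + m/2)-th vertex of the list
   would give a perfect matching none of whose pairs is an edge, although Bob answers that
   matching with a pair of it lying in E. *)
From mathcomp Require Import all_boot zify.

Set Implicit Arguments.
Unset Strict Implicit.
Unset Printing Implicit Defensive.

Lemma exists_large_fibre (T A : finType) (f : T -> A) (x0 : T) :
  exists x, #|T| <= #|A| * #|[set y | f y == f x]|.
Proof.
pose fib a := [set y | f y == a].
have [amax _ max_fib] := @arg_maxnP _ (f x0) xpredT (fun a => #|fib a|) isT.
have card_T : #|T| <= #|A| * #|fib amax|.
  rewrite -[X in X <= _]sum1_card (partition_big f xpredT) //= -sum_nat_const.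
  by apply: leq_sum => a _; rewrite sum1_card -cardsE; apply: max_fib.
have : 0 < #|fib amax|.
  rewrite lt0n; apply: contraTneq card_T => ->; rewrite muln0 -ltnNge.
  by apply/card_gt0P; exists x0.
by case/card_gt0P => x; rewrite inE => /eqP fx; exists x; rewrite fx.
Qed.

Lemma perfect_matching_involution m (sig : 'I_m -> 'I_m) :
  involutive sig -> (forall v, sig v != v) ->
  perfect_matching [set [set v; sig v] | v : 'I_m].
Proof.
move=> sigK sig_neq.
have pair_eq u w : w \in [set u; sig u] -> [set u; sig u] = [set w; sig w].
  by rewrite !inE => /orP[] /eqP ->; rewrite ?sigK 1?setUC.
apply/andP; split; last first.
  by apply/forall_inP => _ /imsetP[v _ ->]; rewrite cards2 (eq_sym v) sig_neq.
apply/and3P; split.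
- apply/eqP/setP => w; rewrite inE; apply/bigcupP; exists [set w; sig w].
    exact: imset_f.
  by rewrite set21.
- apply/trivIsetP => _ _ /imsetP[u _ ->] /imsetP[v _ ->].
  apply: contraR; rewrite -setI_eq0 => /set0Pn[w]; rewrite inE => /andP[hu hv].
  by rewrite (pair_eq _ _ hu) (pair_eq _ _ hv).
- by apply/imsetP => -[v _ /setP /(_ v)]; rewrite !inE eqxx.
Qed.

Lemma adj_sym m (E : {set {set 'I_m}}) : symmetric (adj E).
Proof. by move=> u v; rewrite /adj eq_sym setUC. Qed.

Section SmallComponents.

Variables (m : nat) (E : {set {set 'I_m}}).

Let e := adj E.
Let e_sym : connect_sym e := sym_connect_sym (@adj_sym m E).

Let le_root (u v : 'I_m) := val (root e u) <= val (root e v).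

Let s := sort le_root (enum 'I_m).

Let perm_s : perm_eq s (enum 'I_m). Proof. by rewrite perm_sort perm_refl. Qed.
Let uniq_s : uniq s. Proof. by rewrite (perm_uniq perm_s) enum_uniq. Qed.
Let size_s : size s = m. Proof. by rewrite (perm_size perm_s) size_enum_ord. Qed.
Let index_lt v : index v s < m.
Proof. by rewrite -{2}size_s index_mem (perm_mem perm_s) mem_enum. Qed.

Let le_root_nth x0 i j : i <= j -> j < m -> le_root (nth x0 s i) (nth x0 s j).
Proof.
move=> le_ij lt_jm; apply: (sorted_leq_nth _ _ x0 (sort_sorted _ _)).
- by move=> a b c; apply: leq_trans.
- by move=> a; apply: leqnn.
- by move=> a b; apply: leq_total.
- by rewrite inE size_s; lia.
- by rewrite inE size_s.
- exact: le_ij.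
Qed.

(* In a list sorted by component root, a component containing the entries at positions
   lo and lo + n contains every entry in between. *)
Lemma sorted_connect_card_component x0 lo n : lo + n < m ->
  connect e (nth x0 s lo) (nth x0 s (lo + n)) -> n < #|component E (nth x0 s lo)|.
Proof.
move=> lt_m conn.
have root_lo : root e (nth x0 s lo) = root e (nth x0 s (lo + n)) by apply/(rootP e_sym).
pose f (p : 'I_n.+1) := nth x0 s (lo + p).
have f_inj : injective f.
  move=> p q /eqP; rewrite /f nth_uniq ?size_s //; last 2 first.
  - by have := ltn_ord p; lia.
  - by have := ltn_ord q; lia.
  by rewrite eqn_add2l => /eqP /val_inj.
rewrite -[n.+1](card_ord n.+1) -(card_imset _ f_inj); apply: subset_leq_card.
apply/subsetP => _ /imsetP[p _ ->]; rewrite inE; apply/(rootP e_sym)/val_inj.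
have le_p := ltn_ord p.
have := @le_root_nth x0 lo (lo + p) (leq_addr p lo) ltac:(lia).
have := @le_root_nth x0 (lo + p) (lo + n) ltac:(lia) lt_m.
by rewrite /le_root /f -root_lo; lia.
Qed.

Hypotheses (m_gt0 : 0 < m) (m_even : ~~ odd m).
Hypothesis small_component : forall x, 2 * #|component E x| <= m.

Let n := m./2.
Let m_double : m = n + n.
Proof. by rewrite addnn -[m](odd_double_half) (negbTE m_even). Qed.

Let partner v := nth v s ((index v s + n) %% m).

Let index_partner v : index (partner v) s = (index v s + n) %% m.
Proof. by rewrite index_uniq // size_s ltn_pmod. Qed.

Let nth_index_s w v : nth w s (index v s) = v.
Proof. by rewrite (set_nth_default v) ?size_s // nth_index // -index_mem size_s. Qed.

Let partnerK : involutive partner.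
Proof.
move=> v; rewrite {1}/partner index_partner modnDml -addnA -m_double modnDr.
by rewrite modn_small.
Qed.

Let partner_shift v :
  index v s < n /\ (index v s + n) %% m = index v s + n \/
  n <= index v s /\ (index v s + n) %% m = index v s - n.
Proof.
have := index_lt v; case: (ltnP (index v s) n) => le_vn lt_vm.
  by left; rewrite modn_small //; lia.
right; have -> : index v s + n = index v s - n + m by lia.
by rewrite modnDr modn_small //; lia.
Qed.

Let partner_neq v : partner v != v.
Proof.
apply/eqP => /(congr1 (index^~ s)); rewrite index_partner.
by have := m_gt0; have := m_double; case: (partner_shift v) => -[? ->]; lia.
Qed.

Let partner_disconnected v : ~~ connect e v (partner v).
Proof.
have lt_small lo x0 : lo + n < m -> ~~ connect e (nth x0 s lo) (nth x0 s (lo + n)).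
  move=> lt_m; apply/negP => /(sorted_connect_card_component lt_m).
  by have := small_component (nth x0 s lo); lia.
rewrite /partner; case: (partner_shift v) => -[le_v ->].
  by rewrite -{1}(nth_index_s v v); apply: lt_small; have := index_lt v; lia.
have shift_back : nth v s (index v s - n + n) = v by rewrite subnK.
rewrite e_sym -[X in connect _ _ X]shift_back; apply: lt_small.
by have := index_lt v; lia.
Qed.

Lemma perfect_matching_avoiding_edges :
  exists2 y, perfect_matching y & forall S, S \in y -> S \notin E.
Proof.
exists [set [set v; partner v] | v : 'I_m].
  exact: perfect_matching_involution partnerK partner_neq.
move=> _ /imsetP[v _ ->]; apply: contra (partner_disconnected v) => vE.
by apply: connect1; rewrite /e /adj eq_sym partner_neq.
Qed.

End SmallComponents.

Lemma wins_pair m (x : {ffun 'I_m -> bool}) y a S b : wins x y a S b ->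
  forall u v : 'I_m, u != v -> [set u; v] = S ->
  x u (+) x v = bdot (bxor (bin (Lbits m) u) (bin (Lbits m) v)) (bxor a b).
Proof.
case=> b1 [b2 [_ -> _ win]] u v neq_uv eq_S.
have : (u \in [set b1; b2]) && (v \in [set b1; b2]) by rewrite -eq_S set21 set22.
rewrite !inE => /andP[] /orP[] /eqP eq_u /orP[] /eqP eq_v; subst; rewrite ?eqxx // in neq_uv *.
by rewrite addbC win; congr bdot; apply/ffunP => i; rewrite !ffunE addbC.
Qed.

Section WinningStrategy.

Variables (m : nat) (sA : {ffun 'I_m -> bool} -> bitstr (Lbits m))
  (sB : {set {set 'I_m}} -> {set 'I_m} * bitstr (Lbits m)).
Hypothesis sAB_win : winning_strategy sA sB.

Definition strategy_edges : {set {set 'I_m}} :=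
  [set (sB y).1 | y in [pred y | perfect_matching y]].

Definition parity (x : {ffun 'I_m -> bool}) (S : {set 'I_m}) : bool :=
  \big[addb/false]_(i in S) x i.

Lemma strategy_edges_simple : simple_edges strategy_edges.
Proof.
by apply/forall_inP => _ /imsetP[y y_pm ->]; apply/eqP; apply: sAB_win.1.
Qed.

Lemma colouring_fibre x0 x : sA x = sA x0 -> colouring strategy_edges (parity x0) x.
Proof.
move=> sAx; apply/forallP => u; apply/forallP => v; apply/implyP.
case/imsetP => y y_pm eq_S.
have neq_uv : u != v.
  by apply: contra_eqN (sAB_win.1 y y_pm) => /eqP eq_uv; rewrite -eq_S eq_uv setUid cards1.
rewrite /parity big_setU1 /= ?big_set1 ?inE //.
rewrite (wins_pair (sAB_win.2 x y y_pm) neq_uv eq_S) sAx.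
by rewrite -(wins_pair (sAB_win.2 x0 y y_pm) neq_uv eq_S).
Qed.

Lemma perfect_matching_meets_strategy_edges y : perfect_matching y ->
  exists2 S, S \in y & S \in strategy_edges.
Proof.
move=> y_pm; have [_ [_ [_ _ Sy _]]] := sAB_win.2 [ffun=> false] y y_pm.
by exists (sB y).1 => //; apply: imset_f.
Qed.

End WinningStrategy.

Theorem corollary1 (m : nat) (Hm : 0 < m) (Heven : ~~ odd m) :
  (exists (sA : {ffun 'I_m -> bool} -> bitstr (Lbits m))
          (sB : {set {set 'I_m}} -> {set 'I_m} * bitstr (Lbits m)),
      winning_strategy sA sB) ->
  exists (E : {set {set 'I_m}}) (h : {set 'I_m} -> bool),
    [/\ simple_edges E,
        2 ^ m <= 2 ^ Lbits m * #|[set c : {ffun 'I_m -> bool} | colouring E h c]|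
      & exists x : 'I_m, m < 2 * #|component E x|].
Proof.
move=> [sA [sB win]].
have [x0 large_fibre] := exists_large_fibre sA [ffun=> false].
exists (strategy_edges sB), (parity x0); split.
- exact: strategy_edges_simple win.
- move: large_fibre; rewrite !card_ffun !card_bool !card_ord => /leq_trans; apply.
  rewrite leq_mul2l subset_leq_card ?orbT //; apply/subsetP => x.
  by rewrite !inE => /eqP; apply: colouring_fibre.
- apply/existsP; apply: contraT; rewrite negb_exists => /forallP large.
  have [|y y_pm avoid] := perfect_matching_avoiding_edges Hm Heven (E := strategy_edges sB).
    by move=> x; rewrite leqNgt large.
  have [S Sy SE] := perfect_matching_meets_strategy_edges win y_pm.
  by move: (avoid S Sy); rewrite SE.
Qed.
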